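(* Let $N$ be a necklace with at least two vertices and with exactly $c$ cycles. Then ${\rm mvr}(N)=|N|-c-1$, where $|N|$ is the number of vertices of $N$.
   Context: All graphs are finite and simple. A necklace is a connected graph in which each vertex belongs to at most one cycle. An orthogonal vector representation of a graph $G=(V,E)$ in $\mathbb{R}^d$ is a map $\phi:V\to\mathbb{R}^d$ with $\phi(v)\neq 0$ for all $v$, and for distinct $u,v$: $\langle\phi(u),\phi(v)\rangle=0$ if and only if $uv\notin E$. ${\rm mvr}(G)$ is the smallest $d$ for which such a representation exists. *)

From mathcomp Require Import all_boot all_order all_algebra.
From mathcomp Require Import reals.
Set Implicit Arguments. Unset Strict Implicit. Unset Printing Implicit Defensive.
Import GRing.Theory Num.Theory.
Local Open Scope ring_scope.

Section Graphs.
Variable T : finType.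

Definition simple_graph (e : rel T) : Prop := symmetric e /\ irreflexive e.

Definition connected_graph (e : rel T) : Prop := forall x y : T, connect e x y.

Definition is_cycle_seq (e : rel T) (s : seq T) : bool :=
  [&& uniq s, (2 < size s)%N & path.cycle e s].

Definition cycle_edges (s : seq T) : {set {set T}} :=
  [set [set p.1; p.2] | p in zip s (rot 1 s)].

Definition is_cycle (e : rel T) (E : {set {set T}}) : bool :=
  [exists n : 'I_#|T|.+1, [exists t : n.-tuple T,
     is_cycle_seq e t && (E == cycle_edges t)]].

Definition cycles (e : rel T) : {set {set {set T}}} := [set E | is_cycle e E].

Definition cycle_vertices (E : {set {set T}}) : {set T} := \bigcup_(f in E) f.

Definition necklace (e : rel T) : Prop :=
  connected_graph e /\
  forall (v : T) (E1 E2 : {set {set T}}),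
    E1 \in cycles e -> E2 \in cycles e ->
    v \in cycle_vertices E1 -> v \in cycle_vertices E2 -> E1 = E2.

Definition dotv (R : realType) (d : nat) (x y : 'rV[R]_d) : R :=
  \sum_(i < d) x 0 i * y 0 i.

Definition orth_rep (R : realType) (e : rel T) (d : nat)
  (phi : T -> 'rV[R]_d) : Prop :=
  (forall v, phi v != 0) /\
  (forall u v, u != v -> (dotv (phi u) (phi v) == 0) = ~~ e u v).

Definition has_orth_rep (R : realType) (e : rel T) (d : nat) : Prop :=
  exists phi : T -> 'rV[R]_d, orth_rep e phi.

Definition mvr_is (R : realType) (e : rel T) (m : nat) : Prop :=
  has_orth_rep R e m /\ forall d, has_orth_rep R e d -> (m <= d)%N.

End Graphs.

From mathcomp Require Import all_boot all_order all_algebra.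
From mathcomp Require Import reals zify.
Set Implicit Arguments. Unset Strict Implicit. Unset Printing Implicit Defensive.
Import GRing.Theory Num.Theory.

(* Both bounds are proved by induction on connected vertex sets S, deleting a
   vertex v of S that is not a cut vertex (one farthest from some root).  In a
   necklace such a v is either a leaf, or it has exactly two neighbours and lies
   on the cycle they close through S :\ v; deleting it lowers |S| - c(S) by one,
   resp. leaves it unchanged.

   Lower bound: restricting a representation of S to S :\ v does not enlarge
   its span, and for a leaf v, projecting the image of its neighbour off phi v
   gives a representation of S :\ v whose span misses phi v.

   Upper bound: along with the representation, the induction carries a vector
   X s for every path s avoiding all cycles, orthogonal to every image except
   those of the two ends of s (and to X t for t disjoint from s).  A leaf costs
   one new coordinate; a vertex closing a cycle along s is sent to X s for free. *)

Lemma mem_zip (T1 T2 : eqType) (s : seq T1) (t : seq T2) x y :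
  (x, y) \in zip s t -> x \in s /\ y \in t.
Proof.
elim: s t => [|a s IH] [|b t] //=; rewrite inE => /orP[/eqP[-> ->]|/IH[xs yt]].
  by rewrite !inE !eqxx.
by rewrite !inE xs yt !orbT.
Qed.

Lemma zip_mem_l (T1 T2 : eqType) (s : seq T1) (t : seq T2) x :
  size s = size t -> x \in s -> exists y, (x, y) \in zip s t.
Proof.
elim: s t => [|a s IH] [|b t] //= [st].
rewrite inE => /orP[/eqP->|xs]; first by exists b; rewrite inE eqxx.
by have [y xy] := IH _ st xs; exists y; rewrite inE xy orbT.
Qed.

Lemma zip_rcons_last (T : eqType) (a v x : T) p :
  v \notin a :: p -> (x, v) \in zip (a :: p) (rcons p v) -> x = last a p.
Proof.
elim: p a => [|y p IH] a /=; first by move=> _; rewrite inE => /eqP[->].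
rewrite !inE !negb_or => /and3P[va vy vp] /orP[/eqP[_ vy']|xv].
  by rewrite vy' eqxx in vy.
by apply: IH => //; rewrite inE negb_or vy.
Qed.

Section DotProduct.
Variable R : realType.
Local Open Scope ring_scope.

Lemma dotvC d (x y : 'rV[R]_d) : dotv x y = dotv y x.
Proof. by apply: eq_bigr => i _; rewrite mulrC. Qed.

Lemma dotvDl d (x y z : 'rV[R]_d) : dotv (x + y) z = dotv x z + dotv y z.
Proof. by rewrite /dotv -big_split; apply: eq_bigr => i _; rewrite mxE mulrDl. Qed.

Lemma dotvZl d a (x y : 'rV[R]_d) : dotv (a *: x) y = a * dotv x y.
Proof. by rewrite /dotv mulr_sumr; apply: eq_bigr => i _; rewrite mxE mulrA. Qed.

Lemma dotv0l d (y : 'rV[R]_d) : dotv 0 y = 0.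
Proof. by rewrite /dotv big1 // => i _; rewrite mxE mul0r. Qed.

Lemma dotv0r d (x : 'rV[R]_d) : dotv x 0 = 0.
Proof. by rewrite dotvC dotv0l. Qed.

Lemma dotv_row_mx d (x y : 'rV[R]_d) (a b : R) :
  dotv (row_mx x a%:M) (row_mx y b%:M) = dotv x y + a * b.
Proof.
rewrite /dotv big_split_ord /= big_ord1; congr (_ + _).
  by apply: eq_bigr => i _; rewrite !row_mxEl.
by rewrite !row_mxEr !mxE /= !mulr1n.
Qed.

Lemma dotvv_eq0 d (x : 'rV[R]_d) : (dotv x x == 0) = (x == 0).
Proof.
apply/idP/idP => [/eqP xx0|/eqP->]; last by rewrite dotv0l.
apply/eqP/rowP => i; rewrite mxE.
have := @psumr_eq0P R _ xpredT (fun j => x 0 j * x 0 j) (fun j _ => sqr_ge0 _) xx0 i isT.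
by move/eqP; rewrite mulf_eq0 orbb => /eqP.
Qed.

Lemma dotv_mulmx d (x y : 'rV[R]_d) : dotv x y = (x *m y^T) 0 0.
Proof. by rewrite !mxE; apply: eq_bigr => i _; rewrite !mxE. Qed.

Lemma dotv_proj_orth d (x y : 'rV[R]_d) :
  dotv x x != 0 -> dotv (y - (dotv y x / dotv x x) *: x) x = 0.
Proof. by move=> xx; rewrite dotvDl -scaleNr dotvZl mulNr mulfVK // subrr. Qed.

Definition span_of (T : finType) d (phi : T -> 'rV[R]_d) (S : {set T}) :=
  (\sum_(u in S) <<phi u>>)%MS.

Section Span.
Variables (T : finType) (d : nat) (phi : T -> 'rV[R]_d).

Lemma span_of_sup (S : {set T}) u : u \in S -> (phi u <= span_of phi S)%MS.
Proof. by move=> uS; apply: (sumsmx_sup u) => //; rewrite genmxE. Qed.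

Lemma span_ofS (S S' : {set T}) : S' \subset S -> (span_of phi S' <= span_of phi S)%MS.
Proof.
move=> sS; apply/sumsmx_subP => u uS; rewrite genmxE.
by apply: span_of_sup; apply: (subsetP sS).
Qed.

Lemma span_of_orth (S : {set T}) x : (forall u, u \in S -> dotv (phi u) x = 0) ->
  forall y, (y <= span_of phi S)%MS -> dotv y x = 0.
Proof.
move=> ortho y yS; have sK : (span_of phi S <= kermx x^T)%MS.
  apply/sumsmx_subP => u uS; rewrite genmxE; apply/sub_kermxP.
  by apply/rowP => i; rewrite ord1 -dotv_mulmx ortho // mxE.
by have /sub_kermxP := submx_trans yS sK; rewrite dotv_mulmx => ->; rewrite mxE.
Qed.

Lemma span_of_rank_gt0 (S : {set T}) u : u \in S -> phi u != 0 ->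
  (0 < \rank (span_of phi S))%N.
Proof.
move=> uS nz; rewrite lt0n mxrank_eq0; apply: contraNneq nz => S0.
by rewrite -submx0 -S0 span_of_sup.
Qed.

Lemma span_of_rank_lt (S : {set T}) x m (B : 'M_(m, d)) :
  (forall u, u \in S -> dotv (phi u) x = 0) -> x != 0 ->
  (span_of phi S + x <= B)%MS -> (\rank (span_of phi S) < \rank B)%N.
Proof.
move=> ortho x0 sB; apply: leq_trans (mxrankS sB).
suff : (span_of phi S < span_of phi S + x)%MS by rewrite ltmxErank => /andP[].
rewrite ltmxE addsmxSl /=; apply: contra x0 => /(submx_trans (addsmxSr _ x)) xS.
by rewrite -dotvv_eq0 (span_of_orth ortho xS).
Qed.

End Span.
End DotProduct.

Definition orth_rep_in (R : realType) (T : finType) (e : rel T) d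
  (phi : T -> 'rV[R]_d) (S : {set T}) :=
  (forall u, u \in S -> phi u != 0%R) /\
  (forall u w, u \in S -> w \in S -> u != w -> (dotv (phi u) (phi w) == 0%R) = ~~ e u w).

Lemma orth_rep_inS (R : realType) (T : finType) (e : rel T) d (phi : T -> 'rV[R]_d)
  (S S' : {set T}) : S' \subset S -> orth_rep_in e phi S -> orth_rep_in e phi S'.
Proof.
move=> /subsetP sS [nz orth]; split => [u /sS|u w /sS uS /sS wS]; [exact: nz|exact: orth].
Qed.
Definition induced (T : finType) (e : rel T) (S : {set T}) : rel T :=
  fun x y => [&& x \in S, y \in S & e x y].

Definition connected_in (T : finType) (e : rel T) (S : {set T}) :=
  {in S &, forall x y, connect (induced e S) x y}.

Definition cycles_in (T : finType) (e : rel T) (S : {set T}) :=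
  [set E in cycles e | cycle_vertices E \subset S].

Section Necklace.
Variables (T : finType) (e : rel T).
Hypothesis e_sym : symmetric e.
Hypothesis e_irr : irreflexive e.

Lemma mem_cycle_vertices_edges (t : seq T) v :
  (v \in cycle_vertices (cycle_edges t)) = (v \in t).
Proof.
apply/idP/idP => [|vt].
  case/bigcupP=> f /imsetP[[x y] /mem_zip[xt yt] ->]; rewrite !inE /=.
  by case/orP=> /eqP->; rewrite // -(mem_rot 1).
have [y vy] := zip_mem_l (esym (size_rot 1 t)) vt.
apply/bigcupP; exists [set v; y]; last by rewrite !inE eqxx.
by apply/imsetP; exists (v, y).
Qed.

Lemma is_cycleP (E : {set {set T}}) :
  is_cycle e E -> exists2 t, is_cycle_seq e t & E = cycle_edges t.
Proof. by case/existsP=> n /existsP[t /andP[ct /eqP->]]; exists t. Qed.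

Lemma cycle_seq_neighbours (t : seq T) v : is_cycle_seq e t -> v \in t ->
  exists a b, [/\ a != b, e v a, e v b, a \in t & b \in t].
Proof.
case/and3P=> ut st ct vt; case: (rot_to vt) => i q rq.
have ct' : path.cycle e (v :: q) by rewrite -rq rot_cycle.
have ut' : uniq (v :: q) by rewrite -rq rot_uniq.
have sq : 2 < size (v :: q) by rewrite -rq size_rot.
have memq x : x \in q -> x \in t by move=> xq; rewrite -(mem_rot i) rq inE xq orbT.
case: q rq ct' ut' sq memq => [|a [|c q1]] //= rq.
rewrite rcons_path => /and4P[eva _ _ ebv] /and4P[_ aq _ _] _ memq.
exists a, (last c q1); split.
- by apply: contraNneq aq => ->; rewrite mem_last.
- exact: eva.
- by rewrite e_sym.
- by apply: memq; rewrite inE eqxx.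
- by apply: memq; rewrite inE mem_last orbT.
Qed.

Lemma induced_sym (S : {set T}) : symmetric (induced e S).
Proof. by move=> x y; rewrite /induced e_sym andbCA. Qed.

Lemma path_induced_mem (S : {set T}) x p : path (induced e S) x p -> all (mem S) p.
Proof.
by elim: p x => //= y p IH x /andP[/and3P[_ -> _] /IH].
Qed.

Lemma path_induced (S : {set T}) x p : path (induced e S) x p -> path e x p.
Proof. by apply: sub_path => u w /and3P[]. Qed.

Lemma path_inducedW (S S' : {set T}) x p : path (induced e S) x p ->
  x \in S' -> all (mem S') p -> path (induced e S') x p.
Proof.
elim: p x => //= y p IH x /andP[/and3P[_ _ exy] pp] xS /andP[yS pS].
by rewrite /induced xS yS exy /=; apply: IH.
Qed.

Lemma uniq_path_in (S : {set T}) x y : connect (induced e S) x y -> x != y ->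
  exists p, [/\ path (induced e S) x p, uniq (x :: p), p != [::] & last x p = y].
Proof.
case/connectP=> p0 pp0 -> xy; case: (shortenP pp0) xy => p pp up _ xy.
by exists p; split => //; apply: contraNneq xy => ->.
Qed.

Lemma connected_in_neighbour (S : {set T}) x : connected_in e S -> x \in S -> 1 < #|S| ->
  exists2 y, y \in S & e x y.
Proof.
move=> cS xS /card_gt1P[a [b [aS bS ab]]].
have [u uS ux] : exists2 u, u \in S & u != x.
  by case: (eqVneq a x) => [ax|]; [exists b => //; rewrite -ax eq_sym|exists a].
case/connectP: (cS x u xS uS) => [[|y p]] /=; first by move=> _ ux'; rewrite ux' eqxx in ux.
by case/andP=> /and3P[_ yS exy] _ _; exists y.
Qed.

Section Distance.
Variables (S : {set T}) (r : T).
Hypothesis S_conn : connected_in e S.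
Hypothesis rS : r \in S.

Definition reach_in (n : nat) (u : T) : bool :=
  [exists q : n.-tuple T, path (induced e S) r q && (last r q == u)].

Definition dist_in (u : T) : nat := find (reach_in^~ u) (iota 0 #|T|).

Lemma dist_inP q : path (induced e S) r q -> size q < #|T| ->
  [/\ dist_in (last r q) <= size q, reach_in (dist_in (last r q)) (last r q)
    & dist_in (last r q) < #|T|].
Proof.
move=> pq sq; set u := last r q.
have Pq : reach_in (size q) u by apply/existsP; exists (in_tuple q); rewrite /= pq eqxx.
have hs : has (reach_in^~ u) (iota 0 #|T|) by apply/hasP; exists (size q); rewrite ?mem_iota.
have lt : dist_in u < #|T| by move: hs; rewrite has_find size_iota.
split => //; last by have := nth_find 0 hs; rewrite nth_iota // add0n.
rewrite leqNgt; apply/negP => lt'.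
by have := before_find 0 lt'; rewrite nth_iota ?add0n ?Pq // (ltn_trans lt').
Qed.

Lemma short_path_in u : u \in S ->
  exists q, [/\ path (induced e S) r q, last r q = u & size q < #|T|].
Proof.
move=> uS; have [-> | ru] := eqVneq r u.
  by exists [::]; split => //=; apply/card_gt0P; exists u.
have [q [pq uq _ <-]] := uniq_path_in (S_conn rS uS) ru; exists q; split => //.
by have := card_uniqP uq; rewrite /= => <-; rewrite max_card.
Qed.

Lemma dist_in_lt u : u \in S -> dist_in u < #|T|.
Proof. by case/short_path_in=> q [pq <- sq]; case: (dist_inP pq sq). Qed.

Lemma dist_in_geodesic u : u \in S ->
  exists q, [/\ path (induced e S) r q, last r q = u & size q = dist_in u].
Proof.
case/short_path_in=> q [pq <- sq].
have [_ /existsP[q' /andP[pq' /eqP lq']] _] := dist_inP pq sq.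
by exists q'; rewrite size_tuple lq'.
Qed.

Lemma dist_in_step w y : w \in S -> y \in S -> e w y -> dist_in y <= (dist_in w).+1.
Proof.
move=> wS yS ewy; have [q [pq lq sq]] := dist_in_geodesic wS.
have pqy : path (induced e S) r (rcons q y) by rewrite rcons_path pq lq /induced wS yS ewy.
have [lt | ge] := ltnP (dist_in w).+1 #|T|; last first.
  by apply: leq_trans ge; apply: ltnW; apply: dist_in_lt.
have sz : size (rcons q y) < #|T| by rewrite size_rcons sq.
by have [+ _ _] := dist_inP pqy sz; rewrite last_rcons size_rcons sq.
Qed.

Lemma dist_in_belast q : path (induced e S) r q -> size q = dist_in (last r q) ->
  forall x, x \in belast r q -> dist_in x < size q.
Proof.
elim/last_ind: q => [//|q y IH]; rewrite rcons_path last_rcons belast_rcons size_rcons.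
move=> /andP[pq /and3P[lS yS ely]] sq x.
have lt : size q < #|T| by have := dist_in_lt yS; rewrite -sq => /ltnW.
have [d1 _ _] := dist_inP pq lt.
have := dist_in_step lS yS ely; rewrite -sq ltnS => d2.
have eq1 : size q = dist_in (last r q) by apply/eqP; rewrite eqn_leq d1 d2.
rewrite lastI mem_rcons inE => /orP[/eqP->|xb]; first by rewrite -eq1.
by apply: ltnW; rewrite ltnS IH.
Qed.

End Distance.

(* A vertex at maximal distance from some r is not a cut vertex. *)
Lemma exists_noncut_vertex (S : {set T}) : connected_in e S -> 1 < #|S| ->
  exists2 v, v \in S & connected_in e (S :\ v).
Proof.
move=> cS /card_gt1P[r [r2 [rS r2S rr2]]].
case: (arg_maxnP (dist_in S r) rS) => v vS vmax.
have d0 : dist_in S r r = 0.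
  have T0 : 0 < #|T| by apply/card_gt0P; exists r.
  by have [+ _ _] := @dist_inP S r [::] isT T0; rewrite leqn0 => /eqP.
have rv : r != v.
  apply: contraNneq rr2 => rv.
  have : dist_in S r r2 <= dist_in S r v := vmax r2 r2S.
  rewrite -rv d0 leqn0 => /eqP d2.
  have [q [_ lq sq]] := dist_in_geodesic cS rS r2S.
  by move: lq; rewrite d2 in sq; case: q sq => // _ /= ->.
have cr u : u \in S :\ v -> connect (induced e (S :\ v)) r u.
  rewrite !inE => /andP[uv uS]; have [q [pq lq sq]] := dist_in_geodesic cS rS uS.
  apply/connectP; exists q => //.
  have : all (mem (S :\ v)) (r :: q).
    apply/allP=> x; rewrite lastI lq mem_rcons inE => /orP[/eqP->|xb].
      by rewrite !inE uv uS.
    have := dist_in_belast cS rS pq; rewrite lq => /(_ sq x xb); rewrite sq => dx.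
    have xS : x \in S.
      move: xb => /mem_belast; rewrite inE => /orP[/eqP->//|xq].
      exact: (allP (path_induced_mem pq)).
    rewrite !inE xS andbT; apply: contraTneq dx => ->.
    by rewrite -leqNgt; apply: (vmax u uS).
  by move=> /= /andP[rS' qS']; apply: path_inducedW pq rS' qS'.
exists v => // x y xS yS.
have csym := sym_connect_sym (induced_sym (S :\ v)).
by apply: (connect_trans (y := r)); [rewrite csym|]; apply: cr.
Qed.


Hypothesis cycle_unique : forall (v : T) (E1 E2 : {set {set T}}),
  E1 \in cycles e -> E2 \in cycles e ->
  v \in cycle_vertices E1 -> v \in cycle_vertices E2 -> E1 = E2.

Lemma closed_path_cycle (S : {set T}) v a p : v \in S -> e v a -> a \in S :\ v ->
  path (induced e (S :\ v)) a p -> uniq (a :: p) -> p != [::] -> e v (last a p) ->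
  cycle_edges (v :: a :: p) \in cycles_in e S.
Proof.
move=> vS eva aS pp up pn evl.
have memS' x : x \in a :: p -> x \in S :\ v.
  by rewrite inE => /orP[/eqP->//|xp]; apply: (allP (path_induced_mem pp)).
have vn : v \notin a :: p by apply/negP=> /memS'; rewrite !inE eqxx.
have ct : is_cycle_seq e (v :: a :: p).
  apply/and3P; split.
  - by rewrite /= vn; exact: up.
  - by case: p pn {pp up evl memS' vn}.
  - by rewrite /= rcons_path eva (path_induced pp) /= e_sym.
have sz : size (v :: a :: p) < #|T|.+1.
  by rewrite ltnS; case/and3P: ct => ut _ _; rewrite -(card_uniqP ut) max_card.
rewrite inE; apply/andP; split.
  rewrite inE; apply/existsP; exists (Ordinal sz); apply/existsP.
  by exists (in_tuple (v :: a :: p)); rewrite ct eqxx.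
apply/subsetP=> x; rewrite mem_cycle_vertices_edges inE => /orP[/eqP->//|/memS'].
by rewrite inE => /andP[].
Qed.

Lemma leaf_notin_cycles_in (S : {set T}) v w : (forall u, u \in S -> e v u -> u = w) ->
  forall E, E \in cycles_in e S -> v \notin cycle_vertices E.
Proof.
move=> leaf E; rewrite !inE => /andP[cE sE]; apply/negP => vE.
have [t ct Et] := is_cycleP cE.
have inS x : x \in t -> x \in S.
  by move=> xt; apply: (subsetP sE); rewrite Et mem_cycle_vertices_edges.
have vt : v \in t by rewrite -mem_cycle_vertices_edges -Et.
have [a [b [ab eva evb at_ bt]]] := cycle_seq_neighbours ct vt.
by move: ab; rewrite (leaf a (inS _ at_) eva) (leaf b (inS _ bt) evb) eqxx.
Qed.

Lemma cycles_inS (S S' : {set T}) : S' \subset S -> cycles_in e S' \subset cycles_in e S.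
Proof.
move=> sS; apply/subsetP=> E; rewrite !inE => /andP[-> sE] /=.
exact: subset_trans sE sS.
Qed.

Lemma cycles_in_delete_leaf (S : {set T}) v w : (forall u, u \in S -> e v u -> u = w) ->
  cycles_in e (S :\ v) = cycles_in e S.
Proof.
move=> leaf; apply/eqP; rewrite eqEsubset cycles_inS ?subsetDl //=.
apply/subsetP=> E ES; have := leaf_notin_cycles_in leaf ES.
move: ES; rewrite !inE => /andP[-> sE] /= vE.
apply/subsetP=> x xE; rewrite !inE (subsetP sE _ xE) andbT.
by apply: contraNneq vE => <-.
Qed.

Lemma cycles_in_delete (S : {set T}) v E0 : E0 \in cycles_in e S ->
  v \in cycle_vertices E0 -> cycles_in e (S :\ v) = cycles_in e S :\ E0.
Proof.
move=> E0S vE0; apply/setP=> E; rewrite !inE.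
case cE: (is_cycle e E) => /=; last by rewrite andbF.
have cE' : E \in cycles e by rewrite inE.
have cE0 : E0 \in cycles e by move: E0S; rewrite !inE => /andP[].
apply/idP/andP => [sE|[EE0 sE]].
  split; last exact: subset_trans sE (subsetDl _ _).
  apply/negP=> /eqP EE0; move: sE; rewrite EE0 => /subsetP /(_ v vE0).
  by rewrite !inE eqxx.
apply/subsetP=> x xE; rewrite !inE (subsetP sE _ xE) andbT.
apply: contraNneq EE0 => xv; apply/eqP; apply: (cycle_unique cE' cE0 _ vE0).
by rewrite -xv.
Qed.

Lemma cycle_edge_neighbour (S : {set T}) v a p x : a \in S :\ v ->
  path (induced e (S :\ v)) a p -> x != v ->
  [set v; x] \in cycle_edges (v :: a :: p) -> x = a \/ x = last a p.
Proof.
move=> aS pp xv /imsetP[[q1 q2]]; rewrite rot1_cons /= inE.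
have vn : v \notin a :: p.
  apply/negP=> vap; have : all (mem (S :\ v)) (a :: p) by rewrite /= aS (path_induced_mem pp).
  by move/allP/(_ v vap); rewrite !inE eqxx.
case/orP=> [/eqP[-> ->] E|H E].
  left; have : x \in [set v; a] by rewrite -E !inE eqxx orbT.
  by rewrite !inE (negbTE xv) => /eqP.
have [q1p _] := mem_zip H.
have : v \in [set q1; q2] by rewrite -E !inE eqxx.
rewrite !inE /= => /orP[/eqP vq1|/eqP vq2].
  by move: q1p; rewrite -vq1 (negbTE vn).
rewrite -vq2 in H E; right; rewrite -(zip_rcons_last vn H).
have : x \in [set q1; v] by rewrite -E !inE eqxx orbT.
by rewrite !inE (negbTE xv) orbF => /eqP.
Qed.

(* A third neighbour of v would close a second cycle through v. *)
Lemma closed_path_neighbours (S : {set T}) v a p x : v \in S ->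
  connected_in e (S :\ v) -> e v a -> a \in S :\ v ->
  path (induced e (S :\ v)) a p -> uniq (a :: p) -> p != [::] -> e v (last a p) ->
  x \in S -> e v x -> x = a \/ x = last a p.
Proof.
move=> vS cS' eva aS' pp up pn evl xS evx.
have [-> | xa] := eqVneq x a; first by left.
have xv : x != v by apply: contraTneq evx => ->; rewrite e_irr.
have xS' : x \in S :\ v by rewrite !inE xv.
have [q [pq uq qn lq]] := uniq_path_in (cS' x a xS' aS') xa.
have C1 := closed_path_cycle vS eva aS' pp up pn evl.
have C2 := closed_path_cycle vS evx xS' pq uq qn (etrans (congr1 (e v) lq) eva).
have vC (s : seq T) : v \in cycle_vertices (cycle_edges (v :: s)).
  by rewrite mem_cycle_vertices_edges inE eqxx.
have cyc (E : {set {set T}}) : E \in cycles_in e S -> E \in cycles e.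
  by rewrite inE => /andP[].
have vx : [set v; x] \in cycle_edges (v :: x :: q).
  by apply/imsetP; exists (v, x) => //; rewrite rot1_cons /= inE eqxx.
rewrite (cycle_unique (cyc _ C2) (cyc _ C1) (vC _) (vC _)) in vx.
exact: cycle_edge_neighbour aS' pp xv vx.
Qed.

Lemma necklace_ind (P : {set T} -> Prop) :
  (forall S : {set T}, #|S| = 2 -> connected_in e S -> P S) ->
  (forall (S : {set T}) v w, v \in S -> connected_in e (S :\ v) ->
     w \in S :\ v -> e v w -> (forall u, u \in S -> e v u -> u = w) ->
     1 < #|S :\ v| -> P (S :\ v) -> P S) ->
  (forall (S : {set T}) v a p, v \in S -> e v a -> a \in S :\ v ->
     path (induced e (S :\ v)) a p -> uniq (a :: p) -> p != [::] -> e v (last a p) ->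
     (forall u, u \in S -> e v u -> u = a \/ u = last a p) ->
     P (S :\ v) -> P S) ->
  forall S : {set T}, connected_in e S -> 1 < #|S| -> P S.
Proof.
move=> Pbase Pleaf Pcycle S; elim: {S}#|S| {-2}S (leqnn #|S|) => [|n IH] S.
  by rewrite leqn0 => /eqP->.
move=> Sn cS S1; have [S2|S2] := eqVneq #|S| 2; first exact: Pbase.
have [v vS cS'] := exists_noncut_vertex cS S1.
have cardS : #|S| = #|S :\ v|.+1 by rewrite (cardsD1 v S) vS.
have S'1 : 1 < #|S :\ v| by rewrite -ltnS -cardS ltn_neqAle eq_sym S2 S1.
have S'n : #|S :\ v| <= n by rewrite -ltnS -cardS.
have PS' := IH _ S'n cS' S'1.
have [w wS evw] := connected_in_neighbour cS vS S1.
have inS' u : u \in S -> e v u -> u \in S :\ v.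
  by move=> uS evu; rewrite !inE uS andbT; apply: contraTneq evu => ->; rewrite e_irr.
have wS' := inS' w wS evw.
case: (boolP [exists u, [&& u \in S, e v u & u != w]]) => [|noex]; last first.
  apply: (Pleaf S v w) => // u uS evu; apply/eqP; apply: contraNT noex => uw.
  by apply/existsP; exists u; rewrite uS evu uw.
case/existsP=> b /and3P[bS evb bw].
have wb : w != b by rewrite eq_sym.
have [p [pp up pn lp]] := uniq_path_in (cS' w b wS' (inS' b bS evb)) wb.
have evl : e v (last w p) by rewrite lp.
apply: (Pcycle S v w p) => // x xS evx.
exact: closed_path_neighbours vS cS' evw wS' pp up pn evl xS evx.
Qed.


Lemma mem_set2_pigeonhole (a b x y z : T) :
  x \in [set a; b] -> y \in [set a; b] -> z \in [set a; b] ->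
  x != y -> y != z -> x != z -> False.
Proof. by rewrite !inE => /orP[]/eqP-> /orP[]/eqP-> /orP[]/eqP->; rewrite ?eqxx. Qed.

Lemma cycles_in_card2 (S : {set T}) : #|S| = 2 -> cycles_in e S = set0.
Proof.
move=> /eqP/cards2P[a [b [ab SE]]].
apply/setP => E; rewrite inE; apply/negP; rewrite !inE => /andP[cE sE].
have [t ct Et] := is_cycleP cE.
have [x xt] : exists x, x \in t by case: t ct {Et} => [|x t] //; exists x; rewrite inE eqxx.
have [y [z [yz exy exz yt zt]]] := cycle_seq_neighbours ct xt.
have inS u : u \in t -> u \in [set a; b].
  by move=> ut; rewrite -SE; apply: (subsetP sE); rewrite Et mem_cycle_vertices_edges.
apply: (mem_set2_pigeonhole (inS _ xt) (inS _ yt) (inS _ zt)) => //.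
  by apply: contraTneq exy => ->; rewrite e_irr.
by apply: contraTneq exz => ->; rewrite e_irr.
Qed.

Lemma card_cycles_in_closed_path (S : {set T}) v a p : v \in S -> e v a ->
  a \in S :\ v -> path (induced e (S :\ v)) a p -> uniq (a :: p) -> p != [::] ->
  e v (last a p) -> #|cycles_in e S| = #|cycles_in e (S :\ v)|.+1.
Proof.
move=> vS eva aS pp up pn evl; have C := closed_path_cycle vS eva aS pp up pn evl.
have vC : v \in cycle_vertices (cycle_edges (v :: a :: p)).
  by rewrite mem_cycle_vertices_edges inE eqxx.
by rewrite (cycles_in_delete C vC) (cardsD1 (cycle_edges (v :: a :: p))) C.
Qed.

Lemma card_cycles_in_ub (S : {set T}) : connected_in e S -> 1 < #|S| ->
  #|cycles_in e S| + 2 <= #|S|.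
Proof.
move: S; apply: (necklace_ind (P := fun S => #|cycles_in e S| + 2 <= #|S|)).
- by move=> S S2 _; rewrite cycles_in_card2 // cards0 S2.
- move=> S v w vS _ _ _ leaf _ IH.
  by rewrite -(cycles_in_delete_leaf leaf) (cardsD1 v S) vS; apply: leq_trans IH _.
- move=> S v a p vS eva aS pp up pn evl _ IH.
  by rewrite (card_cycles_in_closed_path vS eva aS pp up pn evl) (cardsD1 v S) vS addSn.
Qed.

Definition necklace_mvr (S : {set T}) : nat := #|S| - #|cycles_in e S| - 1.

Lemma necklace_mvr_card2 (S : {set T}) : #|S| = 2 -> necklace_mvr S = 1.
Proof. by move=> S2; rewrite /necklace_mvr cycles_in_card2 // cards0 S2. Qed.

Lemma necklace_mvr_leaf (S : {set T}) v w : v \in S -> connected_in e (S :\ v) ->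
  1 < #|S :\ v| -> (forall u, u \in S -> e v u -> u = w) ->
  necklace_mvr S = (necklace_mvr (S :\ v)).+1.
Proof.
move=> vS cS' S'1 leaf; have := card_cycles_in_ub cS' S'1.
rewrite /necklace_mvr -(cycles_in_delete_leaf leaf) (cardsD1 v S) vS; lia.
Qed.

Lemma necklace_mvr_cycle (S : {set T}) v a p : v \in S -> e v a ->
  a \in S :\ v -> path (induced e (S :\ v)) a p -> uniq (a :: p) -> p != [::] ->
  e v (last a p) -> necklace_mvr S = necklace_mvr (S :\ v).
Proof.
move=> vS eva aS pp up pn evl; rewrite /necklace_mvr.
by rewrite (card_cycles_in_closed_path vS eva aS pp up pn evl) (cardsD1 v S) vS subSS.
Qed.


Variable R : realType.

(* Projecting phi w off phi v makes phi v orthogonal to the images of S :\ v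
   without changing their inner products, v being adjacent to w only. *)
Lemma orth_rep_prune_leaf (S : {set T}) v w d (phi : T -> 'rV[R]_d) :
  orth_rep_in e phi S -> v \in S -> connected_in e (S :\ v) -> 1 < #|S :\ v| ->
  w \in S :\ v -> (forall u, u \in S -> e v u -> u = w) ->
  exists2 phi' : T -> 'rV[R]_d, orth_rep_in e phi' (S :\ v) &
    \rank (span_of phi' (S :\ v)) < \rank (span_of phi S).
Proof.
move=> [nz orth] vS cS' S'1 wS' leaf.
have S'S u : u \in S :\ v -> u \in S by apply/subsetP/subsetDl.
have orth' u1 u2 : u1 \in S :\ v -> u2 \in S :\ v -> u1 != u2 ->
    (dotv (phi u1) (phi u2) == 0%R) = ~~ e u1 u2.
  by move=> /S'S u1S /S'S u2S; exact: orth.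
have ortv u : u \in S :\ v -> u != w -> dotv (phi u) (phi v) = 0%R.
  move=> uS' uw; have uv : u != v by move: uS'; rewrite !inE => /andP[].
  apply/eqP; rewrite (orth u v (S'S _ uS') vS uv); apply: contra uw => euv.
  by apply/eqP; apply: leaf; rewrite ?S'S // e_sym.
have vv : dotv (phi v) (phi v) != 0%R by rewrite dotvv_eq0 nz.
pose lam := (dotv (phi w) (phi v) / dotv (phi v) (phi v))%R.
pose phi' u := if u == w then (phi w - lam *: phi v)%R else phi u.
have phi'E u : u != w -> phi' u = phi u by move/negbTE => uw; rewrite /phi' uw.
have ort' u : u \in S :\ v -> dotv (phi' u) (phi v) = 0%R.
  move=> uS'; have [->|uw] := eqVneq u w; first by rewrite /phi' eqxx dotv_proj_orth.
  by rewrite phi'E ?ortv.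
have dotw u : u \in S :\ v -> u != w -> dotv (phi' w) (phi u) = dotv (phi w) (phi u).
  move=> uS' uw; rewrite /phi' eqxx dotvDl -scaleNr dotvZl (dotvC (phi v)).
  by rewrite ortv // mulr0 addr0.
have rep' : orth_rep_in e phi' (S :\ v).
  split => [u uS'|u1 u2 u1S u2S u12].
    have [->|uw] := eqVneq u w; last by rewrite phi'E ?nz ?S'S.
    have [y yS ewy] := connected_in_neighbour cS' wS' S'1.
    have yw : y != w by apply: contraTneq ewy => ->; rewrite e_irr.
    have wy : w != y by rewrite eq_sym.
    apply/eqP => w0; have := orth' w y wS' yS wy.
    by rewrite -(dotw _ yS yw) w0 dotv0l eqxx ewy.
  have [e1|n1] := eqVneq u1 w; have [e2|n2] := eqVneq u2 w.
  - by rewrite e1 e2 eqxx in u12.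
  - by subst u1; rewrite (phi'E _ n2) dotw // orth'.
  - by subst u2; rewrite (phi'E _ n1) dotvC dotw // dotvC orth'.
  - by rewrite !phi'E // orth'.
exists phi' => //; apply: (span_of_rank_lt ort' (nz v vS)).
rewrite addsmx_sub span_of_sup // andbT; apply/sumsmx_subP => u uS'; rewrite genmxE /phi'.
case: (u == w); last exact/span_of_sup/S'S.
rewrite -scaleNr; apply: addmx_sub; [exact/span_of_sup/S'S|exact/scalemx_sub/span_of_sup].
Qed.

Lemma necklace_mvr_le_rank (S : {set T}) : connected_in e S -> 1 < #|S| ->
  forall d (phi : T -> 'rV[R]_d), orth_rep_in e phi S ->
  necklace_mvr S <= \rank (span_of phi S).
Proof.
move: S; apply: necklace_ind.
- move=> S S2 _ d phi [nz _]; rewrite necklace_mvr_card2 //.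
  have [u uS] : exists u, u \in S by apply/card_gt0P; rewrite S2.
  exact: span_of_rank_gt0 uS (nz u uS).
- move=> S v w vS cS' wS' _ leaf S'1 IH d phi rep.
  have [phi' rep' lt] := orth_rep_prune_leaf rep vS cS' S'1 wS' leaf.
  by rewrite (necklace_mvr_leaf vS cS' S'1 leaf); apply: leq_ltn_trans (IH _ _ rep') lt.
- move=> S v a p vS eva aS pp up pn evl _ IH d phi rep.
  rewrite (necklace_mvr_cycle vS eva aS pp up pn evl).
  apply: leq_trans (IH _ _ (orth_rep_inS (subsetDl S [set v]) rep)) _.
  exact/mxrankS/span_ofS/subsetDl.
Qed.


Definition cycle_vertices_in (S : {set T}) : {set T} :=
  \bigcup_(E in cycles_in e S) cycle_vertices E.

Definition off_cycle_path (S : {set T}) (s : seq T) : bool :=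
  if s is a :: s1 then
    [&& uniq s, s1 != [::], all (mem S) s, path e a s1 &
        all (fun u => u \notin cycle_vertices_in S) s]
  else false.

Definition path_ends (s : seq T) : seq T :=
  if s is a :: s1 then [:: a; last a s1] else [::].

(* The vector X s is a ready-made image for a new vertex joined to the two ends
   of s, as happens when a cycle is closed along s. *)
Definition orth_rep_with_paths (S : {set T}) (d : nat) : Prop :=
  exists2 phi : T -> 'rV[R]_d, orth_rep_in e phi S &
  exists X : seq T -> 'rV[R]_d,
    (forall s, off_cycle_path S s -> forall u, u \in S ->
       (dotv (X s) (phi u) == 0%R) = (u \notin path_ends s)) /\
    (forall s1 s2, off_cycle_path S s1 -> off_cycle_path S s2 ->
       (forall u, u \in s1 -> u \notin s2) -> dotv (X s1) (X s2) = 0%R).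

Lemma mem_path_ends (s : seq T) : {subset path_ends s <= s}.
Proof.
case: s => [|a s1] //= x; rewrite !inE => /orP[/eqP->|/eqP->]; first by rewrite eqxx.
by rewrite -in_cons mem_last.
Qed.

Lemma cycle_vertices_inS (S S' : {set T}) :
  S' \subset S -> cycle_vertices_in S' \subset cycle_vertices_in S.
Proof.
move=> sS; apply/subsetP => x /bigcupP[E ES xE]; apply/bigcupP; exists E => //.
exact: (subsetP (cycles_inS sS)).
Qed.

Lemma off_cycle_pathW (S S' : {set T}) s : off_cycle_path S s -> all (mem S') s ->
  cycle_vertices_in S' \subset cycle_vertices_in S -> off_cycle_path S' s.
Proof.
case: s => [|a s1] // /and5P[u sn _ ps alc] al sub.
apply/and5P; split => //; apply/allP => x xs.
by apply: contra (allP alc x xs); apply: (subsetP sub).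
Qed.

Section LeafExtension.
Variables (S : {set T}) (v w : T) (d : nat).
Variables (phi : T -> 'rV[R]_d) (X : seq T -> 'rV[R]_d).
Hypothesis wS' : w \in S :\ v.
Hypothesis evw : e v w.
Hypothesis leaf : forall u, u \in S -> e v u -> u = w.
Hypothesis phi_rep : orth_rep_in e phi (S :\ v).
Hypothesis X_ends : forall s, off_cycle_path (S :\ v) s -> forall u, u \in S :\ v ->
  (dotv (X s) (phi u) == 0%R) = (u \notin path_ends s).
Hypothesis X_orth : forall s1 s2, off_cycle_path (S :\ v) s1 ->
  off_cycle_path (S :\ v) s2 -> (forall u, u \in s1 -> u \notin s2) ->
  dotv (X s1) (X s2) = 0%R.

Local Open Scope ring_scope.

Definition leaf_rep u : 'rV[R]_(d + 1) :=
  if u == v then row_mx 0 1%:M else row_mx (phi u) (u == w)%:R%:M.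

(* The last coordinate of X q is chosen to cancel the inner product with the new
   image of w, an end of q. *)
Definition leaf_path_vector (q : seq T) : 'rV[R]_(d + 1) :=
  if behead q == [::] then row_mx 0 1%:M
  else row_mx (X q) (- dotv (X q) (phi w))%:M.

(* Since v has the single neighbour w, v can only be an end of an off-cycle path. *)
Definition leaf_path_vectors (s : seq T) : 'rV[R]_(d + 1) :=
  if s is a :: s1 then
    if a == v then leaf_path_vector s1
    else if last a s1 == v then leaf_path_vector (belast a s1)
    else row_mx (X s) 0%:M
  else 0.

Lemma leaf_rep_dot u1 u2 : u1 != v -> u2 != v ->
  dotv (leaf_rep u1) (leaf_rep u2) = dotv (phi u1) (phi u2) + (u1 == w)%:R * (u2 == w)%:R.
Proof. by move=> n1 n2; rewrite /leaf_rep (negbTE n1) (negbTE n2) dotv_row_mx. Qed.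

Lemma leaf_rep_dot_leaf u : u != v -> dotv (leaf_rep v) (leaf_rep u) = (u == w)%:R.
Proof. by move=> n; rewrite /leaf_rep eqxx (negbTE n) dotv_row_mx dotv0l add0r mul1r. Qed.

Lemma leaf_adjE u : u \in S -> e v u = (u == w).
Proof. by move=> uS; apply/idP/eqP => [|->//]; exact: leaf. Qed.

Lemma leaf_rep_orth : orth_rep_in e leaf_rep S.
Proof.
have [nz orth] := phi_rep; split.
  move=> u uS; rewrite /leaf_rep; case: ifP => [_|/negbT uv].
    by rewrite row_mx_eq0 negb_and matrix_nonzero1 orbT.
  by rewrite row_mx_eq0 negb_and nz ?in_setD1 ?uv.
move=> u1 u2 u1S u2S u12.
have [e1|n1] := eqVneq u1 v; have [e2|n2] := eqVneq u2 v.
- by rewrite e1 e2 eqxx in u12.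
- by rewrite e1 leaf_rep_dot_leaf // leaf_adjE //; case: (u2 == w); rewrite ?oner_eq0 ?eqxx.
- rewrite dotvC e2 leaf_rep_dot_leaf // e_sym leaf_adjE //.
  by case: (u1 == w); rewrite ?oner_eq0 ?eqxx.
- have u1S' : u1 \in S :\ v by rewrite in_setD1 n1.
  have u2S' : u2 \in S :\ v by rewrite in_setD1 n2.
  rewrite leaf_rep_dot //; have [w1|w1] := eqVneq u1 w; have [w2|w2] := eqVneq u2 w;
    rewrite ?mulr0 ?mul0r ?addr0 ?orth //.
  by rewrite w1 w2 eqxx in u12.
Qed.

Lemma cycle_vertices_in_delete_leaf : cycle_vertices_in (S :\ v) = cycle_vertices_in S.
Proof. by rewrite /cycle_vertices_in (cycles_in_delete_leaf leaf). Qed.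

Lemma off_cycle_path_delete_leaf s :
  off_cycle_path S s -> v \notin s -> off_cycle_path (S :\ v) s.
Proof.
case: s => [|a s1] //; rewrite /off_cycle_path cycle_vertices_in_delete_leaf.
move=> /and5P[u sn alls ps allc] vn; apply/and5P; split => //; apply/allP => x xs.
have xS : x \in S := allP alls x xs.
by rewrite inE in_setD1 xS andbT; apply: contraNneq vn => <-.
Qed.

Lemma leaf_path_vectorE q : off_cycle_path (S :\ v) q ->
  leaf_path_vector q = row_mx (X q) (- dotv (X q) (phi w))%:M.
Proof. by case: q => [|a [|b q]]. Qed.

Lemma dotv_leaf_edge u : u \in S ->
  (dotv (row_mx 0 1%:M) (leaf_rep u) == 0) = (u \notin [:: v; w]).
Proof.
move=> uS; rewrite /leaf_rep !inE; have [->|uv] := eqVneq u v.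
  by rewrite dotv_row_mx dotv0l add0r mulr1 oner_eq0.
rewrite dotv_row_mx dotv0l add0r mul1r /=.
by case: (u == w); rewrite ?oner_eq0 ?eqxx.
Qed.

Lemma dotv_leaf_path_vector q z : off_cycle_path (S :\ v) q ->
  path_ends q =i [:: w; z] -> z != w -> forall u, u \in S ->
  (dotv (leaf_path_vector q) (leaf_rep u) == 0) = (u \notin [:: v; z]).
Proof.
move=> vq qE zw u uS; rewrite leaf_path_vectorE //.
have zS' : z \in S :\ v.
  have : z \in q by apply: mem_path_ends; rewrite qE !inE eqxx orbT.
  by case: q vq {qE} => [|a q] // /and5P[_ _ al _ _] zq; exact: (allP al z zq).
have zv : z != v by move: zS'; rewrite !inE => /andP[].
set t := dotv (X q) (phi w).
have t0 : t != 0 by rewrite /t X_ends // qE !inE eqxx.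
rewrite /leaf_rep !inE; have [->|uv] := eqVneq u v.
  by rewrite dotv_row_mx dotv0r add0r mulr1 oppr_eq0 (negbTE t0).
rewrite dotv_row_mx /=; have [->|uw] := eqVneq u w.
  by rewrite mulr1 /t subrr eqxx eq_sym (negbTE zw).
by rewrite mulr0 addr0 X_ends ?in_setD1 ?uv // qE !inE (negbTE uw).
Qed.

Lemma off_cycle_path_leaf_last a s1 : uniq (a :: s1) -> path e a s1 ->
  all (mem S) (a :: s1) -> v \in s1 -> last a s1 = v.
Proof.
move=> us ps als vs; case/splitPr: s1 / vs us ps als => p1 [|y p3].
  by rewrite last_cat.
move=> us ps als; exfalso; move: ps; rewrite cat_path /= => /and3P[_ elv /andP[evy _]].
have inS x : x \in a :: p1 ++ [:: v, y & p3] -> x \in S by move=> xs; exact: (allP als x xs).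
have l1 : last a p1 = w.
  by apply: leaf; [apply: inS; rewrite -cat_cons mem_cat mem_last | rewrite e_sym].
have l2 : y = w by apply: leaf => //; apply: inS; rewrite -cat_cons mem_cat !inE eqxx !orbT.
move: us; rewrite -cat_cons cat_uniq => /and3P[_ /hasPn yn _].
by have := yn y; rewrite !inE eqxx orbT => /(_ isT); rewrite -in_cons l2 -l1 mem_last.
Qed.

Lemma leaf_path_vectors_notin s : off_cycle_path S s -> v \notin s ->
  leaf_path_vectors s = row_mx (X s) 0%:M.
Proof.
case: s => [|a s1] // _; rewrite inE negb_or => /andP[va vs].
rewrite /= eq_sym (negbTE va); case: ifP => // /eqP lv.
by move: (mem_last a s1); rewrite lv inE (negbTE vs) (negbTE va).
Qed.

Variant leaf_path_spec (s : seq T) : Prop :=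
| LeafEdge of leaf_path_vectors s = row_mx 0 1%:M & path_ends s =i [:: v; w]
| LeafPath q z of leaf_path_vectors s = leaf_path_vector q
    & off_cycle_path (S :\ v) q & {subset q <= s} & path_ends q =i [:: w; z]
    & z != w & path_ends s =i [:: v; z].

Lemma leaf_path_head s1 : off_cycle_path S (v :: s1) -> leaf_path_spec (v :: s1).
Proof.
move=> vld; have /and5P[us sn als ps alc] := vld.
case: s1 sn us als ps alc vld => [|y s2] // _ us als ps alc vld.
move: ps => /= /andP[evy ps2].
have yw : y = w by apply: leaf => //; apply: (allP als); rewrite !inE eqxx orbT.
subst y; case: s2 us als ps2 alc vld => [|y s3] us als ps2 alc vld.
  by apply: LeafEdge => [|x]; rewrite //= eqxx.
apply: (@LeafPath _ (w :: y :: s3) (last y s3)); first by rewrite /= eqxx.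
- apply: off_cycle_path_delete_leaf; last by move: us; rewrite cons_uniq => /andP[].
  move: us als alc => /= /andP[_ ->] /andP[_ ->] /andP[_ ->].
  by move: ps2 => /= ->.
- by move=> x xs; rewrite inE xs orbT.
- by [].
- move: us; rewrite /= !inE !negb_or => /and3P[_ /andP[wy ws3] _].
  apply: contraNneq wy => yl; move: (mem_last y s3); rewrite -yl inE.
  by rewrite yl (negbTE ws3) orbF.
- by [].
Qed.

Lemma leaf_path_last a s1 : a != v -> last a s1 = v ->
  off_cycle_path S (a :: s1) -> leaf_path_spec (a :: s1).
Proof.
move=> av lv vld.
have XE : leaf_path_vectors (a :: s1) = leaf_path_vector (belast a s1).
  by rewrite /= (negbTE av) lv eqxx.
have /and5P[us sn als ps alc] := vld.
case/lastP: s1 sn us als ps alc vld lv XE => [|s1' y] // _ us als ps alc vld.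
rewrite last_rcons => yv; subst y; rewrite belast_rcons => XE.
move: ps; rewrite rcons_path => /andP[ps1 elv].
have lw : last a s1' = w.
  apply: leaf; last by rewrite e_sym.
  by apply: (allP als); rewrite -rcons_cons mem_rcons inE mem_last orbT.
have us' : uniq (a :: s1') by move: us; rewrite -rcons_cons rcons_uniq => /andP[].
case: s1' us' ps1 lw als alc vld us XE {elv} => [|y s3] us' ps1 lw als alc vld us XE.
  by apply: LeafEdge => // x; move: lw => /= ->; rewrite !inE orbC.
apply: (@LeafPath _ (a :: y :: s3) a) => //.
- apply: off_cycle_path_delete_leaf.
    apply/and5P; split => //.
      by move: als; rewrite -rcons_cons all_rcons => /andP[_ ->].
    by move: alc; rewrite -rcons_cons all_rcons => /andP[_ ->].
  by move: us; rewrite -rcons_cons rcons_uniq => /andP[].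
- by move=> x xs; rewrite -rcons_cons mem_rcons inE xs orbT.
- by move=> x; move: lw => /= ->; rewrite !inE orbC.
- move: lw => /= <-; apply: contraTneq (mem_last y s3) => <-.
  by move: us'; rewrite cons_uniq => /andP[].
- by move=> x; rewrite /= last_rcons !inE orbC.
Qed.

Lemma leaf_path_vectorsP s : off_cycle_path S s -> v \in s -> leaf_path_spec s.
Proof.
case: s => [|a s1] //; have [->|av] := eqVneq a v.
  by move=> vld _; exact: leaf_path_head.
move=> vld vin; have /and5P[us _ als ps _] := vld.
have vs1 : v \in s1 by move: vin; rewrite inE eq_sym (negbTE av).
exact: leaf_path_last av (off_cycle_path_leaf_last us ps als vs1) vld.
Qed.

Lemma leaf_path_vectors_ends s : off_cycle_path S s -> forall u, u \in S ->
  (dotv (leaf_path_vectors s) (leaf_rep u) == 0) = (u \notin path_ends s).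
Proof.
move=> vs u uS; have [vin|vn] := boolP (v \in s); last first.
  rewrite leaf_path_vectors_notin // /leaf_rep; have [->|uv] := eqVneq u v.
    rewrite dotv_row_mx dotv0r mul0r addr0 eqxx; apply/esym.
    by apply: contra vn; apply: mem_path_ends.
  have uS' : u \in S :\ v by rewrite in_setD1 uv.
  by rewrite dotv_row_mx mul0r addr0 X_ends ?off_cycle_path_delete_leaf.
case: (leaf_path_vectorsP vs vin) => [-> sE | q z -> vq _ qE zw sE].
  by rewrite dotv_leaf_edge // sE.
by rewrite (dotv_leaf_path_vector vq qE zw uS) sE.
Qed.

Lemma leaf_path_vectors_orth_half s1 s2 : off_cycle_path S s1 -> off_cycle_path S s2 ->
  v \notin s1 -> (forall u, u \in s1 -> u \notin s2) ->
  dotv (leaf_path_vectors s1) (leaf_path_vectors s2) = 0.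
Proof.
move=> v1 v2 n1 dis; rewrite (leaf_path_vectors_notin v1 n1).
have [n2|n2] := boolP (v \in s2); last first.
  rewrite leaf_path_vectors_notin // dotv_row_mx mul0r addr0.
  by apply: X_orth => //; apply: off_cycle_path_delete_leaf.
case: (leaf_path_vectorsP v2 n2) => [-> _|q z -> vq sq _ _ _].
  by rewrite dotv_row_mx dotv0r mul0r addr0.
rewrite leaf_path_vectorE // dotv_row_mx mul0r addr0.
apply: X_orth => //; first exact: off_cycle_path_delete_leaf.
by move=> u /dis; apply: contra; apply: sq.
Qed.

Lemma orth_rep_with_paths_leaf : orth_rep_with_paths S (d + 1).
Proof.
exists leaf_rep; first exact: leaf_rep_orth.
exists leaf_path_vectors; split; first exact: leaf_path_vectors_ends.
move=> s1 s2 v1 v2 dis; have [n1|n1] := boolP (v \in s1); last first.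
  exact: leaf_path_vectors_orth_half.
rewrite dotvC; apply: leaf_path_vectors_orth_half => // [|u us2].
  exact: dis.
by apply: contraL us2; apply: dis.
Qed.

End LeafExtension.

Section CycleExtension.
Variables (S : {set T}) (v a : T) (p : seq T) (d : nat).
Variables (phi : T -> 'rV[R]_d) (X : seq T -> 'rV[R]_d).
Hypothesis vS : v \in S.
Hypothesis eva : e v a.
Hypothesis aS' : a \in S :\ v.
Hypothesis pp : path (induced e (S :\ v)) a p.
Hypothesis up : uniq (a :: p).
Hypothesis pn : p != [::].
Hypothesis evl : e v (last a p).
Hypothesis v_adj : forall u, u \in S -> e v u -> u = a \/ u = last a p.
Hypothesis phi_rep : orth_rep_in e phi (S :\ v).
Hypothesis X_ends : forall s, off_cycle_path (S :\ v) s -> forall u, u \in S :\ v ->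
  (dotv (X s) (phi u) == 0%R) = (u \notin path_ends s).
Hypothesis X_orth : forall s1 s2, off_cycle_path (S :\ v) s1 ->
  off_cycle_path (S :\ v) s2 -> (forall u, u \in s1 -> u \notin s2) ->
  dotv (X s1) (X s2) = 0%R.

Local Open Scope ring_scope.

Definition cycle_rep u := if u == v then X (a :: p) else phi u.

Lemma closing_cycle_vertices x : x \in v :: a :: p -> x \in cycle_vertices_in S.
Proof.
move=> xs; apply/bigcupP; exists (cycle_edges (v :: a :: p)).
  exact: closed_path_cycle vS eva aS' pp up pn evl.
by rewrite mem_cycle_vertices_edges.
Qed.

Lemma closing_path_off_cycle : off_cycle_path (S :\ v) (a :: p).
Proof.
apply/and5P; split => //; first by rewrite /= aS' (path_induced_mem pp).
  exact: path_induced pp.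
apply/allP => x xs; apply/negP => /bigcupP[E ES xE].
have C := closed_path_cycle vS eva aS' pp up pn evl.
have cE : E \in cycles e by move: ES; rewrite inE => /andP[].
have cC : cycle_edges (v :: a :: p) \in cycles e by move: C; rewrite inE => /andP[].
have xC : x \in cycle_vertices (cycle_edges (v :: a :: p)).
  by rewrite mem_cycle_vertices_edges inE xs orbT.
have vE : v \in cycle_vertices E.
  by rewrite (cycle_unique cE cC xE xC) mem_cycle_vertices_edges inE eqxx.
by move: ES; rewrite inE => /andP[_ /subsetP /(_ v vE)]; rewrite !inE eqxx.
Qed.

Lemma closing_adjE u : u \in S -> e v u = (u \in path_ends (a :: p)).
Proof.
move=> uS; rewrite /= !inE; apply/idP/idP.
  by case/(v_adj uS) => ->; rewrite eqxx ?orbT.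
by case/orP => /eqP->.
Qed.

Lemma cycle_rep_orth : orth_rep_in e cycle_rep S.
Proof.
have [nz orth] := phi_rep; split.
  move=> u uS; rewrite /cycle_rep; case: ifP => [_|/negbT uv]; last by rewrite nz // in_setD1 uv.
  apply/eqP => X0; have := X_ends closing_path_off_cycle aS'.
  by rewrite X0 dotv0l eqxx /= !inE eqxx.
move=> u1 u2 u1S u2S u12; rewrite /cycle_rep.
have [e1|n1] := eqVneq u1 v; have [e2|n2] := eqVneq u2 v.
- by rewrite e1 e2 eqxx in u12.
- have u2S' : u2 \in S :\ v by rewrite in_setD1 n2.
  by rewrite e1 (X_ends closing_path_off_cycle u2S') closing_adjE.
- have u1S' : u1 \in S :\ v by rewrite in_setD1 n1.
  by rewrite e2 dotvC (X_ends closing_path_off_cycle u1S') e_sym closing_adjE.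
- by apply: orth => //; rewrite in_setD1 ?n1 ?n2.
Qed.

Lemma off_cycle_path_delete_cycle s : off_cycle_path S s ->
  off_cycle_path (S :\ v) s /\ (forall x, x \in s -> x \notin v :: a :: p).
Proof.
move=> vs; have nc x : x \in s -> x \notin v :: a :: p.
  move=> xs; apply: contra _ (_ : x \notin cycle_vertices_in S).
    exact: closing_cycle_vertices.
  by case: s vs xs => [|b s1] // /and5P[_ _ _ _ /allP al] /al.
split=> //; apply: (off_cycle_pathW vs _ (cycle_vertices_inS (subsetDl S [set v]))).
apply/allP => x xs; have := nc x xs; rewrite !inE negb_or => /andP[xv _].
rewrite xv /=.
by case: s vs xs {nc} => [|b s1] // /and5P[_ _ /allP al _ _] /al.
Qed.

Lemma orth_rep_with_paths_cycle : orth_rep_with_paths S d.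
Proof.
exists cycle_rep; first exact: cycle_rep_orth.
exists X; split; last first.
  move=> s1 s2 /off_cycle_path_delete_cycle[v1 _] /off_cycle_path_delete_cycle[v2 _].
  exact: X_orth.
move=> s vs u uS; have [vs' nc] := off_cycle_path_delete_cycle vs.
rewrite /cycle_rep; have [->|uv] := eqVneq u v; last by apply: X_ends; rewrite // in_setD1 uv.
rewrite X_orth ?closing_path_off_cycle // ?eqxx.
  by apply/esym/negP => /mem_path_ends /nc; rewrite inE eqxx.
by move=> x /nc; rewrite inE negb_or => /andP[].
Qed.

End CycleExtension.

Lemma off_cycle_path_ends (S : {set T}) s : off_cycle_path S s ->
  exists x y, [/\ x != y, x \in S, y \in S, path_ends s = [:: x; y] & x \in s].
Proof.
case: s => [|x s1] // /and5P[us sn als _ _]; exists x, (last x s1); split => //.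
- case: s1 sn us {als} => [|y s2] // _; rewrite cons_uniq => /andP[xn _].
  by apply: contraNneq xn => ->; rewrite /= mem_last.
- by apply: (allP als); rewrite inE eqxx.
- by apply: (allP als); rewrite mem_last.
- by rewrite inE eqxx.
Qed.

Lemma orth_rep_with_paths_card2 (S : {set T}) :
  #|S| = 2 -> connected_in e S -> orth_rep_with_paths S 1.
Proof.
move=> S2 cS; have := S2; move/eqP/cards2P => [a [b [ab SE]]].
have eab : e a b.
  have aS : a \in S by rewrite SE !inE eqxx.
  have S1 : 1 < #|S| by rewrite S2.
  have [y yS eay] := connected_in_neighbour cS aS S1.
  move: yS; rewrite SE !inE => /orP[/eqP ya|/eqP yb]; last by rewrite -yb.
  by move: eay; rewrite ya e_irr.
pose one : 'rV[R]_1 := const_mx 1%R.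
have one1 : dotv one one = 1%R by rewrite /dotv big_ord1 !mxE mulr1.
have one0 : one != 0%R.
  by apply/eqP => /rowP /(_ ord0); rewrite !mxE => /eqP; rewrite oner_eq0.
exists (fun _ => one).
  split=> // u w; rewrite SE !inE one1 oner_eq0 => /orP[]/eqP-> /orP[]/eqP->;
    rewrite ?eqxx // => _; by rewrite ?eab // e_sym eab.
exists (fun _ => one); split.
  move=> s vs u uS; rewrite one1 oner_eq0; have [//|un] := boolP (u \in path_ends s).
  exfalso.
  have [x [y [xy xS yS sE xs]]] := off_cycle_path_ends vs.
  move: un; rewrite sE !inE negb_or => /andP[ux uy].
  by apply: (@mem_set2_pigeonhole a b u x y); rewrite -?SE // eq_sym.
move=> s1 s2 v1 v2 dis; exfalso.
have [x [y [xy xS yS sE xs]]] := off_cycle_path_ends v1.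
have [z [_ [_ zS _ _ zs]]] := off_cycle_path_ends v2.
have xz : x != z by apply: contraTneq zs => <-; exact: dis.
have yz : y != z.
  apply: contraTneq zs => <-; apply: dis; apply: mem_path_ends.
  by rewrite sE !inE eqxx orbT.
by apply: (@mem_set2_pigeonhole a b x y z); rewrite -?SE.
Qed.

Lemma orth_rep_with_paths_mvr (S : {set T}) : connected_in e S -> 1 < #|S| ->
  orth_rep_with_paths S (necklace_mvr S).
Proof.
move: S; apply: necklace_ind.
- by move=> S S2 cS; rewrite necklace_mvr_card2 //; apply: orth_rep_with_paths_card2.
- move=> S v w vS cS' wS' evw leaf S'1 [phi rep [X [X_ends X_orth]]].
  rewrite (necklace_mvr_leaf vS cS' S'1 leaf) -addn1.
  exact: orth_rep_with_paths_leaf wS' evw leaf rep X_ends X_orth.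
- move=> S v a p vS eva aS' pp up pn evl v_adj [phi rep [X [X_ends X_orth]]].
  rewrite (necklace_mvr_cycle vS eva aS' pp up pn evl).
  exact: orth_rep_with_paths_cycle vS eva aS' pp up pn evl v_adj rep X_ends X_orth.
Qed.

End Necklace.

Theorem proposition5p4 (R : realType) (T : finType) (e : rel T) (c : nat) :
  simple_graph e -> necklace e -> (2 <= #|T|)%N -> #|cycles e| = c ->
  mvr_is R e (#|T| - c - 1)%N.
Proof.
move=> [e_sym e_irr] [e_conn cycle_unique] T2 <-.
have eT : induced e [set: T] =2 e by move=> x y; rewrite /induced !inE.
have cT : connected_in e [set: T] by move=> x y _ _; rewrite (eq_connect eT); apply: e_conn.
have T1 : 1 < #|[set: T]| by rewrite cardsT.
have cycT : cycles_in e [set: T] = cycles e.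
  by apply/setP => E; rewrite !inE subsetT andbT.
have mvrT : necklace_mvr e [set: T] = #|T| - #|cycles e| - 1.
  by rewrite /necklace_mvr cardsT cycT.
split.
  have [phi [nz orth] _] := orth_rep_with_paths_mvr e_sym e_irr cycle_unique R cT T1.
  by rewrite -mvrT; exists phi; split => [v|u v]; [exact: nz | exact: orth].
move=> d [phi [nz orth]]; rewrite -mvrT.
have rep : orth_rep_in e phi [set: T] by split => [u _|u v _ _]; [exact: nz | exact: orth].
exact: leq_trans (necklace_mvr_le_rank e_sym e_irr cycle_unique cT T1 rep) (rank_leq_col _).
Qed.
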